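(* For every integer $n\ge 1$, let \[ R'_n:=\sum_{k=n}^{\infty}\frac{(-1)^{k-1}}{k}. \] Then \begin{align*} R'_{n} =(-1)^{\,n-1}\,(2n-1)!\;\sum_{k=0}^{\infty}\frac{1}{16^{k}}\Bigg[&\frac{1}{(8k+1)_{2n}}+\frac{1}{(8k+2)_{2n}}+\frac{1}{2\,(8k+3)_{2n}}\\ &-\frac{1}{4\,(8k+5)_{2n}}-\frac{1}{4\,(8k+6)_{2n}}-\frac{1}{8\,(8k+7)_{2n}}\Bigg]. \end{align*}
   Context: For a real number $a$ and integer $m\ge 0$, $(a)_m$ denotes the rising factorial (Pochhammer symbol): $(a)_0:=1$ and $(a)_m:=a(a+1)\cdots(a+m-1)=\Gamma(a+m)/\Gamma(a)$. Note $R'_1=\log 2$. *)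

From Stdlib Require Import Reals Factorial.
From Coquelicot Require Import Coquelicot.
Open Scope R_scope.

Fixpoint poch (a : R) (m : nat) : R :=
  match m with
  | O => 1
  | S m' => poch a m' * (a + INR m')
  end.

Definition bbp_term (n k : nat) : R :=
  / 16 ^ k *
  ( / poch (8 * INR k + 1) (2 * n)
  + / poch (8 * INR k + 2) (2 * n)
  + / (2 * poch (8 * INR k + 3) (2 * n))
  - / (4 * poch (8 * INR k + 5) (2 * n))
  - / (4 * poch (8 * INR k + 6) (2 * n))
  - / (8 * poch (8 * INR k + 7) (2 * n)) ).

(* Put A_n = (2n-1)! * Σ_k bbp_term n k and L_n = Σ_j (-1)^j / (n+j), so that
   R'_n = (-1)^(n-1) L_n.  Both sequences satisfy x_n + x_(n+1) = 1/n.  For L_n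
   this is a shift of the series.  For A_n, (2n-1)!/(a)_(2n) is the Beta value
   B(a, 2n), and B(a, 2n+2) = B(a, 2n) - 2 B(a+1, 2n) + B(a+2, 2n) makes the k-th
   term of A_n + A_(n+1) telescope to g k - g (k+1) with g k = 2 B(8k+1, 2n) / 16^k,
   so the sum is 2 B(1, 2n) = 1/n.  Hence A_n - L_n alternates in sign with
   constant modulus; since both are O(1/n), it vanishes. *)

From Stdlib Require Import Reals Factorial Lra Lia.
From Coquelicot Require Import Coquelicot.
Open Scope R_scope.

Lemma poch_pos a m : 0 < a -> 0 < poch a m.
Proof.
  intros Ha; induction m as [|m IH]; simpl; [lra|].
  pose proof (pos_INR m); apply Rmult_lt_0_compat; lra.
Qed.

Lemma poch_S a m : poch a (S m) = a * poch (a + 1) m.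
Proof.
  revert a; induction m as [|m IH]; intros a; [simpl; ring|].
  change (poch a (S (S m))) with (poch a (S m) * (a + INR (S m))).
  change (poch (a + 1) (S m)) with (poch (a + 1) m * (a + 1 + INR m)).
  rewrite IH, S_INR; ring.
Qed.

Lemma poch_le_compat a a' m : 0 < a <= a' -> poch a m <= poch a' m.
Proof.
  intros Ha; induction m as [|m IH]; simpl; [lra|].
  pose proof (pos_INR m); pose proof (poch_pos a m).
  apply Rmult_le_compat; lra.
Qed.

Lemma poch_1 m : poch 1 m = INR (fact m).
Proof.
  induction m as [|m IH]; [reflexivity|].
  change (poch 1 (S m)) with (poch 1 m * (1 + INR m)).
  rewrite IH, fact_simpl, mult_INR, S_INR; ring.
Qed.

(* [beta a m] is the Beta integral B(a, m+1) = ∫_0^1 t^(a-1) (1-t)^m dt; its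
   recurrences below come from (1-t)^(m+1) = (1-t)^m - t (1-t)^m. *)
Definition beta (a : R) (m : nat) : R := INR (fact m) / poch a (S m).

Lemma beta_pos a m : 0 < a -> 0 < beta a m.
Proof.
  intros Ha; apply Rdiv_lt_0_compat; [apply INR_fact_lt_0 | now apply poch_pos].
Qed.

Lemma beta_S a m : 0 < a -> beta a (S m) = beta a m - beta (a + 1) m.
Proof.
  intros Ha; unfold beta.
  rewrite (poch_S a (S m)), (poch_S a m).
  change (poch (a + 1) (S m)) with (poch (a + 1) m * (a + 1 + INR m)).
  rewrite fact_simpl, mult_INR, S_INR.
  pose proof (pos_INR m); pose proof (poch_pos (a + 1) m).
  field; repeat split; lra.
Qed.

Lemma beta_SS a m : 0 < a ->
  beta a (S (S m)) = beta a m - 2 * beta (a + 1) m + beta (a + 2) m.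
Proof.
  intros Ha.
  rewrite !beta_S by lra.
  replace (a + 1 + 1) with (a + 2) by ring; ring.
Qed.

Lemma beta_1 m : beta 1 m = / INR (S m).
Proof.
  unfold beta; rewrite poch_1, fact_simpl, mult_INR.
  field; split; [apply not_0_INR; lia | apply INR_fact_neq_0].
Qed.

Lemma beta_le_1 a m : 1 <= a -> beta a m <= beta 1 m.
Proof.
  intros Ha; unfold beta, Rdiv.
  apply Rmult_le_compat_l; [apply pos_INR|].
  apply Rinv_le_contravar; [apply poch_pos; lra | apply poch_le_compat; lra].
Qed.

Definition bbp_beta (m k : nat) : R :=
  / 16 ^ k *
  ( beta (8 * INR k + 1) m + beta (8 * INR k + 2) m + / 2 * beta (8 * INR k + 3) m
  - / 4 * beta (8 * INR k + 5) m - / 4 * beta (8 * INR k + 6) m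
  - / 8 * beta (8 * INR k + 7) m ).

Lemma bbp_term_beta i k :
  INR (fact (2 * i + 1)) * bbp_term (S i) k = bbp_beta (2 * i + 1) k.
Proof.
  unfold bbp_term, bbp_beta, beta.
  replace (2 * S i)%nat with (S (2 * i + 1)) by lia.
  rewrite !Rinv_mult; unfold Rdiv; ring.
Qed.

Definition bbp_head (m k : nat) : R := 2 * / 16 ^ k * beta (8 * INR k + 1) m.

(* Writing b j = beta (8k + j) m, the second-difference recurrence turns the
   weights (1, 1, 1/2, 0, -1/4, -1/4, -1/8, 0), which repeat with factor 1/16
   every 8 steps, into 2 b 1 - (2/16) b 9. *)
Lemma bbp_beta_telescope m k :
  bbp_beta m k + bbp_beta (S (S m)) k = bbp_head m k - bbp_head m (S k).
Proof.
  assert (second_difference : forall a a1 a2, 0 < a -> a1 = a + 1 -> a2 = a + 2 ->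
            beta a (S (S m)) = beta a m - 2 * beta a1 m + beta a2 m).
  { intros a a1 a2 Ha -> ->; now apply beta_SS. }
  unfold bbp_beta, bbp_head.
  pose proof (pos_INR k).
  set (x := 8 * INR k).
  rewrite S_INR; replace (8 * (INR k + 1) + 1) with (x + 9) by (unfold x; ring).
  rewrite (second_difference (x + 1) (x + 2) (x + 3)) by (unfold x; lra).
  rewrite (second_difference (x + 2) (x + 3) (x + 4)) by (unfold x; lra).
  rewrite (second_difference (x + 3) (x + 4) (x + 5)) by (unfold x; lra).
  rewrite (second_difference (x + 5) (x + 6) (x + 7)) by (unfold x; lra).
  rewrite (second_difference (x + 6) (x + 7) (x + 8)) by (unfold x; lra).
  rewrite (second_difference (x + 7) (x + 8) (x + 9)) by (unfold x; lra).
  rewrite <- tech_pow_Rmult, Rinv_mult.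
  field; apply pow_nonzero; lra.
Qed.

Lemma is_lim_seq_bbp_head m : is_lim_seq (bbp_head m) 0.
Proof.
  apply is_lim_seq_le_le with (u := fun _ => 0)
    (w := fun k => 2 * beta 1 m * (/ 16) ^ k).
  - intros k; unfold bbp_head.
    pose proof (pos_INR k).
    pose proof (beta_pos (8 * INR k + 1) m ltac:(lra)).
    pose proof (beta_le_1 (8 * INR k + 1) m ltac:(lra)).
    rewrite pow_inv.
    assert (0 < / 16 ^ k) by (apply Rinv_0_lt_compat, pow_lt; lra).
    split; nra.
  - apply is_lim_seq_const.
  - replace (Finite 0) with (Rbar_mult (2 * beta 1 m) 0) by (simpl; f_equal; ring).
    apply is_lim_seq_scal_l, is_lim_seq_geom.
    rewrite Rabs_right; lra.
Qed.

Lemma is_series_telescope (g : nat -> R) (l : R) :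
  is_lim_seq g l -> is_series (fun k => g k - g (S k)) (g O - l).
Proof.
  intros Hg.
  apply is_series_Reals, is_lim_seq_Reals.
  apply is_lim_seq_ext with (u := fun N => g O - g (S N)).
  { intros N; induction N as [|N IH]; simpl; [reflexivity|]. rewrite <- IH; ring. }
  apply is_lim_seq_minus'; [apply is_lim_seq_const|].
  now apply (is_lim_seq_incr_1 g).
Qed.

Lemma series_geom_dominated (u : nat -> R) (C q : R) :
  0 <= q < 1 -> (forall k, Rabs (u k) <= C * q ^ k) ->
  ex_series u /\ Rabs (Series u) <= C / (1 - q).
Proof.
  intros Hq Hu.
  assert (Hgeom : is_series (fun k => C * q ^ k) (C / (1 - q))).
  { apply (is_series_scal_l C (fun k => q ^ k) (/ (1 - q))), is_series_geom.
    rewrite Rabs_right; lra. }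
  assert (Habs : ex_series (fun k => Rabs (u k))).
  { apply (@ex_series_le R_AbsRing R_CompleteNormedModule) with (b := fun k => C * q ^ k).
    - intros k; unfold norm; simpl; unfold abs; simpl.
      rewrite Rabs_Rabsolu; apply Hu.
    - eexists; exact Hgeom. }
  split; [now apply ex_series_Rabs|].
  eapply Rle_trans; [now apply Series_Rabs|].
  rewrite <- (is_series_unique _ _ Hgeom).
  apply Series_le; [|eexists; exact Hgeom].
  intros k; split; [apply Rabs_pos | apply Hu].
Qed.

Lemma Rabs_bbp_beta_le m k : Rabs (bbp_beta m k) <= 3 * beta 1 m * (/ 16) ^ k.
Proof.
  unfold bbp_beta.
  pose proof (pos_INR k).
  assert (Hb : forall j, 1 <= j -> 0 < beta (8 * INR k + j) m <= beta 1 m).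
  { intros j Hj; split; [apply beta_pos | apply beta_le_1]; lra. }
  pose proof (Hb 1 ltac:(lra)); pose proof (Hb 2 ltac:(lra));
  pose proof (Hb 3 ltac:(lra)); pose proof (Hb 5 ltac:(lra));
  pose proof (Hb 6 ltac:(lra)); pose proof (Hb 7 ltac:(lra)).
  assert (H16 : 0 < / 16 ^ k) by (apply Rinv_0_lt_compat, pow_lt; lra).
  rewrite Rabs_mult, pow_inv, (Rabs_right (/ 16 ^ k)) by lra.
  rewrite Rmult_comm; apply Rmult_le_compat_r; [lra|].
  apply Rabs_le; lra.
Qed.

Definition bbp_sum (m : nat) : R := Series (bbp_beta m).

Lemma ex_series_bbp_beta m : ex_series (bbp_beta m).
Proof.
  apply (series_geom_dominated _ (3 * beta 1 m) (/ 16)); [lra | apply Rabs_bbp_beta_le].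
Qed.

Lemma Rabs_bbp_sum_le m : Rabs (bbp_sum m) <= 3 * beta 1 m / (1 - / 16).
Proof. apply series_geom_dominated; [lra | apply Rabs_bbp_beta_le]. Qed.

Lemma bbp_sum_pair m : bbp_sum m + bbp_sum (S (S m)) = 2 * beta 1 m.
Proof.
  unfold bbp_sum.
  rewrite <- Series_plus by apply ex_series_bbp_beta.
  apply is_series_unique.
  apply is_series_ext with (a := fun k => bbp_head m k - bbp_head m (S k)).
  { intros k; symmetry; apply bbp_beta_telescope. }
  replace (2 * beta 1 m) with (bbp_head m O - 0)
    by (unfold bbp_head; simpl; replace (8 * 0 + 1) with 1 by ring; field).
  apply is_series_telescope, is_lim_seq_bbp_head.
Qed.

Lemma alternated_series_bounds (U : nat -> R) :
  Un_decreasing U -> Un_cv U 0 ->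
  exists l, is_series (fun j => (-1) ^ j * U j) l /\ 0 <= l <= U O.
Proof.
  intros Hdec Hcv.
  destruct (alternated_series U Hdec Hcv) as [l Hl].
  exists l; split; [now apply is_series_Reals|].
  destruct (alternated_series_ineq U l 0 Hdec Hcv Hl) as [Hlow Hhigh].
  simpl in Hlow, Hhigh; unfold tg_alt in Hlow, Hhigh; simpl in Hlow, Hhigh.
  specialize (Hdec O).
  split; lra.
Qed.

Definition alt_tail (n : nat) : R := Series (fun j => (-1) ^ j / INR (n + j)).

Lemma alt_tail_spec n : (1 <= n)%nat ->
  is_series (fun j => (-1) ^ j / INR (n + j)) (alt_tail n) /\
  0 <= alt_tail n <= / INR n.
Proof.
  intros Hn.
  set (U := fun j => / INR (n + j)).
  assert (Hdec : Un_decreasing U).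
  { intros j; unfold U.
    apply Rinv_le_contravar; [apply lt_0_INR; lia | apply le_INR; lia]. }
  assert (Hcv : Un_cv U 0).
  { apply is_lim_seq_Reals; unfold U.
    replace (Finite 0) with (Rbar_inv p_infty) by reflexivity.
    apply is_lim_seq_inv; [|discriminate].
    apply is_lim_seq_ext with (u := fun j => INR (j + n)).
    { intros j; f_equal; lia. }
    apply (is_lim_seq_incr_n INR n), is_lim_seq_INR. }
  destruct (alternated_series_bounds U Hdec Hcv) as [l [Hl Hbound]].
  assert (Hsum : is_series (fun j => (-1) ^ j / INR (n + j)) l) by exact Hl.
  unfold alt_tail; rewrite (is_series_unique _ _ Hsum).
  unfold U in Hbound; rewrite Nat.add_0_r in Hbound.
  split; assumption.
Qed.

Lemma alt_tail_pair n : (1 <= n)%nat -> alt_tail n + alt_tail (S n) = / INR n.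
Proof.
  intros Hn.
  unfold alt_tail at 1.
  rewrite Series_incr_1, Nat.add_0_r by (eexists; now apply alt_tail_spec).
  rewrite (Series_ext _ (fun j => - ((-1) ^ j / INR (S n + j))))
    by (intros j; rewrite <- Nat.add_succ_comm, <- tech_pow_Rmult; unfold Rdiv; ring).
  rewrite Series_opp; unfold alt_tail, Rdiv; simpl; ring.
Qed.

Lemma sign_alternating_vanish (d : nat -> R) (C : R) :
  (forall i, d (S i) = - d i) -> (forall i, Rabs (d i) <= C * / INR (S i)) ->
  forall i, d i = 0.
Proof.
  intros Hsign Hbound.
  assert (Hconst : forall i, Rabs (d i) = Rabs (d O)).
  { intros i; induction i as [|i IH]; [reflexivity|].
    now rewrite Hsign, Rabs_Ropp. }
  assert (Hlim : is_lim_seq (fun i => C * / INR (S i)) 0).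
  { replace (Finite 0) with (Rbar_mult C 0) by (simpl; f_equal; ring).
    apply is_lim_seq_scal_l.
    replace (Finite 0) with (Rbar_inv p_infty) by reflexivity.
    apply is_lim_seq_inv; [|discriminate].
    apply (is_lim_seq_incr_1 INR), is_lim_seq_INR. }
  assert (Hzero : Rbar_le (Rabs (d O)) 0).
  { apply (is_lim_seq_le (fun _ => Rabs (d O)) (fun i => C * / INR (S i)));
      [intros i; rewrite <- (Hconst i); apply Hbound | apply is_lim_seq_const | exact Hlim]. }
  simpl in Hzero.
  intros i; apply Rabs_eq_0; rewrite Hconst.
  pose proof (Rabs_pos (d O)); lra.
Qed.

Lemma INR_S_double i : INR (S (2 * i + 1)) = 2 * INR (S i).
Proof. rewrite !S_INR, plus_INR, mult_INR; simpl (INR 2); simpl (INR 1); lra. Qed.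

Definition bbp_gap (i : nat) : R := bbp_sum (2 * i + 1) - alt_tail (S i).

Lemma bbp_gap_S i : bbp_gap (S i) = - bbp_gap i.
Proof.
  unfold bbp_gap.
  pose proof (bbp_sum_pair (2 * i + 1)) as Hbbp.
  pose proof (alt_tail_pair (S i) ltac:(lia)) as Halt.
  replace (S (S (2 * i + 1))) with (2 * S i + 1)%nat in Hbbp by lia.
  rewrite beta_1, INR_S_double, Rinv_mult in Hbbp.
  lra.
Qed.

Lemma Rabs_bbp_gap_le i : Rabs (bbp_gap i) <= 3 * / INR (S i).
Proof.
  unfold bbp_gap.
  pose proof (Rabs_bbp_sum_le (2 * i + 1)) as Hbbp.
  destruct (alt_tail_spec (S i) ltac:(lia)) as [_ Halt].
  rewrite beta_1, INR_S_double, Rinv_mult in Hbbp.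
  apply Rabs_le_between in Hbbp.
  assert (0 < / INR (S i)) by (apply Rinv_0_lt_compat, lt_0_INR; lia).
  apply Rabs_le; lra.
Qed.

Lemma fact_mul_Series_bbp_term i :
  INR (fact (2 * i + 1)) * Series (bbp_term (S i)) = alt_tail (S i).
Proof.
  rewrite <- Series_scal_l, (Series_ext _ _ (bbp_term_beta i)).
  pose proof (sign_alternating_vanish bbp_gap 3 bbp_gap_S Rabs_bbp_gap_le i) as Hgap.
  unfold bbp_gap, bbp_sum in Hgap; lra.
Qed.

Lemma ex_series_bbp_term i : ex_series (bbp_term (S i)).
Proof.
  apply (ex_series_ext (fun k => / INR (fact (2 * i + 1)) * bbp_beta (2 * i + 1) k)).
  { intros k; rewrite <- bbp_term_beta, <- Rmult_assoc, Rinv_l, Rmult_1_l;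
      [reflexivity | apply INR_fact_neq_0]. }
  apply (ex_series_scal_l (V := R_NormedModule)), ex_series_bbp_beta.
Qed.

Theorem theorem2 : forall n : nat, (1 <= n)%nat ->
  ex_series (bbp_term n) /\
  is_series (fun j : nat => (-1) ^ (n + j - 1) / INR (n + j))
            ((-1) ^ (n - 1) * INR (fact (2 * n - 1)) * Series (bbp_term n)).
Proof.
  intros n Hn.
  destruct n as [|i]; [lia|].
  split; [apply ex_series_bbp_term|].
  replace (2 * S i - 1)%nat with (2 * i + 1)%nat by lia.
  replace (S i - 1)%nat with i by lia.
  rewrite Rmult_assoc, fact_mul_Series_bbp_term.
  destruct (alt_tail_spec (S i) ltac:(lia)) as [Halt _].
  apply (is_series_ext (fun j => (-1) ^ i * ((-1) ^ j / INR (S i + j)))).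
  { intros j; replace (S i + j - 1)%nat with (i + j)%nat by lia.
    rewrite pow_add; unfold Rdiv; symmetry; apply Rmult_assoc. }
  exact (is_series_scal_l _ _ _ Halt).
Qed.
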